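(* In the $\ell^2$ linear social choice setting, the maximum coordinate plurality rule has worst-case distortion $O(d^2)$.
   Context: Setting ($\ell^2$ linear social choice). Fix a dimension $d$. An instance consists of $n$ voters and $m$ candidates, each a vector in $\mathbb{R}^d_{\ge 0}$ with Euclidean norm $1$ (superscripts denote coordinates), with every voter vector in $\mathrm{Cone}(C)$ (nonnegative linear combinations of the candidate vectors $C$). Utility $u_v(c)=v^\top c$; each voter reports a ranking of $C$ consistent with its utilities (ties broken arbitrarily). $\mathrm{UW}(c)=\sum_v u_v(c)$. A rule may use the profile and the candidate vectors but not the voter vectors. Distortion on an instance: $\max_c\mathrm{UW}(c)/\mathrm{UW}(\text{output})$; worst-case distortion is the supremum over instances, as a function of $d$. Maximum coordinate plurality: form $\hat C\subseteq C$ containing, for each $i\in[d]$, one candidate maximizing the coordinate $c^i$ over $C$ (so $|\hat C|\le d$); restrict rankings to $\hat C$ and output a plurality winner (a candidate of $\hat C$ ranked first among $\hat C$ by the most voters, ties arbitrary). *)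

From HB Require Import structures.
From mathcomp Require Import all_boot all_order all_algebra.
From mathcomp Require Import all_classical all_reals.
Set Implicit Arguments. Unset Strict Implicit. Unset Printing Implicit Defensive.
Import Order.TTheory GRing.Theory Num.Theory.
Local Open Scope ring_scope.

Definition dotp (R : realType) (d : nat) (u v : 'rV[R]_d) : R :=
  \sum_(i < d) u 0 i * v 0 i.

Definition nonneg_unit (R : realType) (d : nat) (u : 'rV[R]_d) : Prop :=
  (forall i, 0 <= u 0 i) /\ \sum_(i < d) u 0 i ^+ 2 = 1.

Definition in_cone (R : realType) (d m : nat) (C : 'I_m -> 'rV[R]_d) (v : 'rV[R]_d) : Prop :=
  exists lam : 'I_m -> R, (forall j, 0 <= lam j) /\ v = \sum_(j < m) lam j *: C j.

Definition UW (R : realType) (d n m : nat) (C : 'I_m -> 'rV[R]_d) (V : 'I_n -> 'rV[R]_d)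
  (c : 'I_m) : R := \sum_(v < n) dotp (V v) (C c).

(* A profile: pos v c is the position (0 = top) of candidate c in voter v's
   ranking; it must be a bijection consistent with utilities (ties arbitrary). *)
Definition consistent_profile (R : realType) (d n m : nat) (C : 'I_m -> 'rV[R]_d)
  (V : 'I_n -> 'rV[R]_d) (pos : 'I_n -> 'I_m -> 'I_m) : Prop :=
  forall v, injective (pos v) /\
    (forall c c', dotp (V v) (C c') < dotp (V v) (C c) -> (pos v c < pos v c')%N).

(* sel i is a candidate maximizing coordinate i over C; Chat = image of sel *)
Definition coord_maximizers (R : realType) (d m : nat) (C : 'I_m -> 'rV[R]_d)
  (sel : 'I_d -> 'I_m) : Prop :=
  forall i (c : 'I_m), C c 0 i <= C (sel i) 0 i.

Definition in_hat (d m : nat) (sel : 'I_d -> 'I_m) (c : 'I_m) : bool :=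
  [exists i, sel i == c].

Definition hat_plurality_score (d n m : nat) (sel : 'I_d -> 'I_m)
  (pos : 'I_n -> 'I_m -> 'I_m) (c : 'I_m) : nat :=
  #|[set v : 'I_n | in_hat sel c &&
      [forall c' : 'I_m, in_hat sel c' ==> (pos v c <= pos v c')%N]]|.

Definition max_coord_plurality_output (d n m : nat) (sel : 'I_d -> 'I_m)
  (pos : 'I_n -> 'I_m -> 'I_m) (w : 'I_m) : Prop :=
  in_hat sel w /\
  forall c, in_hat sel c -> (hat_plurality_score sel pos c <= hat_plurality_score sel pos w)%N.

(* Each voter v lies in the cone of the candidates, which forces v . c >= 1/d for
   some coordinate maximizer c: writing M for the vector of maximal coordinates,
   every candidate satisfies c . M >= c . c = 1, hence v . M >= 1, and one of the d
   terms v^i M^i <= v . C(sel i) is at least 1/d.  So a voter who ranks the winner w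
   first among the maximizers gives it utility at least 1/d, i.e.
   UW(w) >= score(w) / d.  Every voter has a favourite among the at most d
   maximizers and w has the largest score, so score(w) >= n / d, while any
   candidate has welfare at most n. *)

From HB Require Import structures.
From mathcomp Require Import all_boot all_order all_algebra.
From mathcomp Require Import all_classical all_reals.
From mathcomp Require Import lra.
Set Implicit Arguments. Unset Strict Implicit. Unset Printing Implicit Defensive.
Import Order.TTheory GRing.Theory Num.Theory.
Local Open Scope ring_scope.

Section DotProduct.
Variables (R : realType) (d : nat).
Implicit Types (u v x y : 'rV[R]_d).

Definition nonneg_coords v := forall i, 0 <= v 0 i.

Lemma dotp_ge0 u v : nonneg_coords u -> nonneg_coords v -> 0 <= dotp u v.
Proof. by move=> u0 v0; apply: sumr_ge0 => i _; apply: mulr_ge0. Qed.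

Lemma dotp_le1 u v :
  \sum_(i < d) u 0 i ^+ 2 = 1 -> \sum_(i < d) v 0 i ^+ 2 = 1 -> dotp u v <= 1.
Proof.
move=> u1 v1; suff : 2 * dotp u v <= \sum_(i < d) (u 0 i ^+ 2 + v 0 i ^+ 2).
  by rewrite big_split /= u1 v1; lra.
rewrite /dotp mulr_sumr; apply: ler_sum => i _; have := sqr_ge0 (u 0 i - v 0 i); nra.
Qed.

Lemma ler_dotp2l y u x : nonneg_coords y ->
  (forall i, u 0 i <= x 0 i) -> dotp y u <= dotp y x.
Proof. by move=> y0 ux; apply: ler_sum => i _; apply: ler_wpM2l. Qed.

Lemma dotp_sumZl m (lam : 'I_m -> R) (C : 'I_m -> 'rV[R]_d) x :
  dotp (\sum_j lam j *: C j) x = \sum_j lam j * dotp (C j) x.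
Proof.
rewrite /dotp; under [RHS]eq_bigr do rewrite mulr_sumr.
rewrite exchange_big; apply: eq_bigr => i _.
by rewrite summxE mulr_suml; apply: eq_bigr => j _; rewrite mxE mulrA.
Qed.

Lemma dotpC u v : dotp u v = dotp v u.
Proof. by apply: eq_bigr => i _; rewrite mulrC. Qed.

Lemma unit_dim_gt0 v : \sum_(i < d) v 0 i ^+ 2 = 1 -> (0 < d)%N.
Proof. by case: d v => [|//] v; rewrite big_ord0 => /esym/eqP; rewrite oner_eq0. Qed.

Lemma exists_mean_le (a : 'I_d -> R) : (0 < d)%N ->
  exists i, \sum_j a j <= d%:R * a i.
Proof.
case: d a => [//|d'] a _; have [i _ imax] := @arg_maxP _ _ _ ord0 predT a isT.
exists i; rewrite mulr_natl -[X in _ *+ X]card_ord -sumr_const.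
by apply: ler_sum => j _; apply: imax.
Qed.

End DotProduct.

Section MaxCoordinates.
Variables (R : realType) (d m : nat) (C : 'I_m -> 'rV[R]_d) (sel : 'I_d -> 'I_m).
Hypothesis C_unit : forall c, nonneg_unit (C c).
Hypothesis sel_max : coord_maximizers C sel.

Definition max_coords : 'rV[R]_d := \row_i C (sel i) 0 i.

Lemma max_coords_nonneg : nonneg_coords max_coords.
Proof. by move=> i; rewrite mxE; case: (C_unit (sel i)). Qed.

Lemma dotp_le_max_coords y c : nonneg_coords y -> dotp y (C c) <= dotp y max_coords.
Proof. by move=> y0; apply: ler_dotp2l => // i; rewrite mxE; apply: sel_max. Qed.

Lemma one_le_dotp_max_coords c : 1 <= dotp (C c) max_coords.
Proof.
have [c0 c1] := C_unit c; have -> : 1 = dotp (C c) (C c).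
  by rewrite -c1; apply: eq_bigr => i _; rewrite expr2.
exact: dotp_le_max_coords.
Qed.

(* With L the total weight of v = \sum_j lam j *: C j and s = v . max_coords,
   we get L <= s and 1 = v . v <= L s, hence s >= 1. *)
Lemma cone_one_le_dotp_max_coords v :
  nonneg_unit v -> in_cone C v -> 1 <= dotp v max_coords.
Proof.
move=> [v0 v1] [lam [lam0 vE]]; pose L := \sum_j lam j.
have L_le : L <= dotp v max_coords.
  rewrite vE dotp_sumZl; apply: ler_sum => j _.
  by rewrite -{1}[lam j]mulr1; apply: ler_wpM2l => //; apply: one_le_dotp_max_coords.
have one_le : 1 <= L * dotp v max_coords.
  have -> : 1 = dotp v v by rewrite -v1; apply: eq_bigr => i _; rewrite expr2.
  rewrite {2}vE dotpC dotp_sumZl /L mulr_suml; apply: ler_sum => j _.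
  by apply: ler_wpM2l => //; rewrite dotpC; apply: dotp_le_max_coords.
have s0 : 0 <= dotp v max_coords by apply: dotp_ge0 => //; apply: max_coords_nonneg.
nra.
Qed.

Lemma cone_exists_sel_dotp_ge v : nonneg_unit v -> in_cone C v ->
  exists i, 1 <= d%:R * dotp v (C (sel i)).
Proof.
move=> v_unit v_cone; have [v0 v1] := v_unit.
have [i mean_le] := exists_mean_le (fun i => v 0 i * max_coords 0 i) (unit_dim_gt0 v1).
exists i; apply: le_trans (cone_one_le_dotp_max_coords v_unit v_cone) _.
apply: le_trans mean_le _; apply: ler_wpM2l => //.
rewrite /dotp (bigD1 i) //= mxE lerDl; apply: sumr_ge0 => j _.
by apply: mulr_ge0 => //; case: (C_unit (sel i)).
Qed.

End MaxCoordinates.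

Section HatPlurality.
Variables (d n m : nat) (sel : 'I_d -> 'I_m) (pos : 'I_n -> 'I_m -> 'I_m).

Definition hat_first (c : 'I_m) : {set 'I_n} :=
  [set v | in_hat sel c && [forall c', in_hat sel c' ==> (pos v c <= pos v c')%N]].

Lemma hat_plurality_scoreE c : hat_plurality_score sel pos c = #|hat_first c|.
Proof. by []. Qed.

Lemma in_hat_sel i : in_hat sel (sel i).
Proof. by apply/existsP; exists i. Qed.

Lemma exists_hat_first v : (0 < d)%N -> exists i, v \in hat_first (sel i).
Proof.
move=> d_gt0; have [c c_hat c_min] := arg_minnP (pos v) (in_hat_sel (Ordinal d_gt0)).
have /existsP [i /eqP ic] := c_hat; exists i; rewrite inE ic c_hat /=.
by apply/forallP => c'; apply/implyP; apply: c_min.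
Qed.

Lemma card_le_sum_hat_scores : (0 < d)%N ->
  (n <= \sum_i hat_plurality_score sel pos (sel i))%N.
Proof.
move=> d_gt0; rewrite -[n in (n <= _)%N]card_ord -sum1_card.
under [X in (_ <= X)%N]eq_bigr do rewrite hat_plurality_scoreE -sum1_card big_mkcond.
rewrite exchange_big; apply: leq_sum => v _.
have [i v_first] := exists_hat_first v d_gt0.
by rewrite (bigD1 i) //= v_first leq_addr.
Qed.

Lemma sum_hat_scores_le_winner w : max_coord_plurality_output sel pos w ->
  (\sum_i hat_plurality_score sel pos (sel i) <= d * hat_plurality_score sel pos w)%N.
Proof.
move=> [_ w_max]; rewrite -[d in (d * _)%N]card_ord -sum_nat_const.
by apply: leq_sum => i _; apply: w_max (in_hat_sel i).
Qed.

End HatPlurality.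

Section Welfare.
Variables (R : realType) (d n m : nat) (C : 'I_m -> 'rV[R]_d) (V : 'I_n -> 'rV[R]_d).
Variables (pos : 'I_n -> 'I_m -> 'I_m) (sel : 'I_d -> 'I_m).
Hypothesis C_unit : forall c, nonneg_unit (C c).
Hypothesis V_unit : forall v, nonneg_unit (V v).

Lemma UW_le_card c : UW C V c <= n%:R.
Proof.
rewrite /UW -[X in _ <= X%:R]card_ord -sumr_const; apply: ler_sum => v _.
exact: dotp_le1 (V_unit v).2 (C_unit c).2.
Qed.

Lemma hat_first_dotp_ge v c i : consistent_profile C V pos ->
  v \in hat_first sel pos c -> dotp (V v) (C (sel i)) <= dotp (V v) (C c).
Proof.
move=> pos_cons; rewrite inE => /andP [_ /forallP /(_ (sel i))].
rewrite in_hat_sel /= => c_before; rewrite leNgt; apply/negP.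
by move=> /(pos_cons v).2; rewrite ltnNge c_before.
Qed.

Hypothesis V_cone : forall v, in_cone C (V v).
Hypothesis sel_max : coord_maximizers C sel.

Lemma hat_score_le_UW c : consistent_profile C V pos ->
  (hat_plurality_score sel pos c)%:R <= d%:R * UW C V c.
Proof.
move=> pos_cons; rewrite hat_plurality_scoreE -sum1_card natr_sum big_mkcond /UW mulr_sumr.
apply: ler_sum => v _; case: ifP => v_first; last first.
  by apply: mulr_ge0 => //; apply: dotp_ge0; [case: (V_unit v)|case: (C_unit c)].
have [i one_le] := cone_exists_sel_dotp_ge C_unit sel_max (V_unit v) (V_cone v).
apply: le_trans one_le _; apply: ler_wpM2l => //.
exact: hat_first_dotp_ge pos_cons v_first.
Qed.

End Welfare.

Theorem theorem14 (R : realType) :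
  exists K : R, 0 < K /\
  forall (d n m : nat) (C : 'I_m -> 'rV[R]_d) (V : 'I_n -> 'rV[R]_d)
    (pos : 'I_n -> 'I_m -> 'I_m) (sel : 'I_d -> 'I_m) (w : 'I_m),
    (forall c, nonneg_unit (C c)) ->
    (forall v, nonneg_unit (V v)) ->
    (forall v, in_cone C (V v)) ->
    consistent_profile C V pos ->
    coord_maximizers C sel ->
    max_coord_plurality_output sel pos w ->
    forall c : 'I_m, UW C V c <= K * (d%:R) ^+ 2 * UW C V w.
Proof.
exists 1; split=> // d n m C V pos sel w C_unit V_unit V_cone pos_cons sel_max w_out c.
have d_gt0 := unit_dim_gt0 (C_unit c).2.
rewrite mul1r expr2 -mulrA; apply: le_trans (UW_le_card C_unit V_unit c) _.
apply: (@le_trans _ _ (d * hat_plurality_score sel pos w)%:R).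
  rewrite ler_nat; apply: leq_trans (card_le_sum_hat_scores sel pos d_gt0) _.
  exact: sum_hat_scores_le_winner w_out.
rewrite natrM; apply: ler_wpM2l => //.
exact: hat_score_le_UW C_unit V_unit V_cone sel_max w pos_cons.
Qed.
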